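(* Let $G=(V,E)$ be a twinless strongly connected directed graph, and let $G^{1}=(V,E^{1})$ with $E^{1}\subseteq E$ be a strongly connected spanning subgraph of $G$ that is not twinless strongly connected. Let $(v,w)\in E\setminus E^{1}$ be an edge such that $v$ and $w$ lie in different twinless strongly connected components of $G^{1}$. If $G^{1}$ has $k$ twinless strongly connected components, then the graph $(V,E^{1}\cup\{(v,w)\})$ has fewer than $k$ twinless strongly connected components.
   Context: Directed graphs are finite. Vertices $a,b$ of a directed graph are twinless strongly connected if there exist a directed path $p$ from $a$ to $b$ and a directed path $q$ from $b$ to $a$ such that for every edge $(x,y)$ of $p$, the reverse edge $(y,x)$ does not belong to $q$. This is an equivalence relation on the vertices; its equivalence classes are the twinless strongly connected components. A directed graph is twinless strongly connected if it has exactly one twinless strongly connected component (equivalently, it has a strongly connected spanning subgraph containing no pair of antiparallel edges $(x,y),(y,x)$). *)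

From mathcomp Require Import all_boot.
From mathcomp Require Import boolp.
Set Implicit Arguments. Unset Strict Implicit. Unset Printing Implicit Defensive.

Section Digraph.
Variable V : finType.

Definition erel (E : {set V * V}) : rel V := fun x y => (x, y) \in E.

Definition dpath (E : {set V * V}) (a : V) (s : seq V) : bool := path (erel E) a s.

Definition pedges (a : V) (s : seq V) : seq (V * V) := zip (a :: s) s.

Definition tsc (E : {set V * V}) (a b : V) : Prop :=
  exists p q : seq V,
    [/\ dpath E a p, last a p = b, dpath E b q, last b q = a &
        forall x y : V, (x, y) \in pedges a p -> (y, x) \notin pedges b q].

Definition tscc (E : {set V * V}) (a : V) : {set V} := [set b | `[< tsc E a b >]].

Definition n_tscc (E : {set V * V}) : nat := #|[set tscc E a | a : V]|.

Definition strongly_connected (E : {set V * V}) : Prop :=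
  forall a b : V, connect (erel E) a b.

Definition twinless_strongly_connected (E : {set V * V}) : Prop := n_tscc E = 1.

End Digraph.

From mathcomp Require Import all_boot.
From mathcomp Require Import boolp.
Set Implicit Arguments. Unset Strict Implicit. Unset Printing Implicit Defensive.

(** Adding (v, w) can only merge twinless strongly connected classes, and it
   merges those of v and w: E1 has no edge (w, v), since together with a path
   from v to w it would already make v and w twinless strongly connected; so
   (v, w) and a path from w back to v in E1 form a twinless pair of paths.

   The counting needs that twinless strong connectivity is transitive in a
   strongly connected graph. This goes through a cut characterisation: a and b
   are twinless strongly connected iff every vertex set containing a but not b
   is left by some edge and entered by some edge that is not its reverse. That
   condition is clearly transitive. Conversely, starting from {a}, it lets one
   attach ear after ear to a twin-free strongly connected subgraph until b is
   reached. *)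

Lemma card_imset_coarser (T aT rT : finType) (f : T -> aT) (g : T -> rT) a b :
  (forall x y, f x = f y -> g x = g y) -> f a != f b -> g a = g b ->
  #|[set g x | x : T]| < #|[set f x | x : T]|.
Proof.
move=> fg fab gab.
pose h c := if [pick x | f x == c] is Some x then g x else g a.
have hf x : h (f x) = g x.
  by rewrite /h; case: pickP => [y /eqP/fg //|/(_ x)]; rewrite eqxx.
have -> : [set g x | x : T] = h @: [set f x | x : T].
  by rewrite -imset_comp; apply: eq_imset => x /=; rewrite hf.
rewrite ltn_neqAle leq_imset_card andbT; apply: contra fab => /imset_injP inj.
by apply/eqP/inj; rewrite ?imset_f ?hf.
Qed.

Section TwinlessStrongConnectivity.
Variable V : finType.
Implicit Types (H F : {set V * V}) (S X : {set V}) (a b c x y z u v : V) (s t : seq V).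

Lemma pedges_cons x y s : pedges x (y :: s) = (x, y) :: pedges y s.
Proof. by []. Qed.

Lemma path_pedgesE (e : rel V) x s :
  path e x s = all [pred uv | e uv.1 uv.2] (pedges x s).
Proof. by elim: s x => //= y s IH x; rewrite IH. Qed.

Lemma path_pedges (e : rel V) x s u v : path e x s -> (u, v) \in pedges x s -> e u v.
Proof. by rewrite path_pedgesE => /allP + uv => /(_ _ uv). Qed.

Lemma mem_pedges x s u v : (u, v) \in pedges x s -> u \in belast x s /\ v \in s.
Proof.
elim: s x => //= y s IH x; rewrite in_cons => /orP[/eqP[-> ->]|/IH[uS vS]].
  by rewrite !mem_head.
by rewrite !in_cons uS vS !orbT.
Qed.

Lemma pedges_cross X x s : x \in X -> last x s \notin X ->
  exists u v, [/\ (u, v) \in pedges x s, u \in X & v \notin X].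
Proof.
elim: s x => [|y s IH] x /=; first by move=> ->.
move=> xX lX; case: (boolP (y \in X)) => yX; last by exists x, y; rewrite mem_head.
by have [u [v [uv uX vX]]] := IH y yX lX; exists u, v; rewrite in_cons uv orbT.
Qed.

Lemma connect_to_last (e : rel V) x s u :
  path e x s -> u \in x :: s -> connect e u (last x s).
Proof.
move=> ps us; case/splitPl: us ps => s1 s2 <-; rewrite cat_path last_cat => /andP[_ p2].
exact: path_connect p2 _ (mem_last _ _).
Qed.

Definition twin_free H := forall u v, (u, v) \in H -> (v, u) \notin H.

Lemma twin_freeU H F : twin_free H -> twin_free F ->
  (forall u v, (u, v) \in H -> (v, u) \notin F) -> twin_free (H :|: F).
Proof.
move=> twH twF twHF u v; rewrite !in_setU negb_or => /orP[uvH|uvF].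
  by rewrite twH ?twHF.
by rewrite twF ?andbT //; apply: contraL uvF; apply: twHF.
Qed.

Lemma uniq_twin_free x s : uniq (x :: s) -> twin_free [set e in pedges x s].
Proof.
move=> us u v; rewrite !inE => uv; apply/negP => vu.
elim: s x us uv vu => // y s IH x /andP[xs us]; rewrite !pedges_cons !in_cons.
case/orP=> [/eqP[-> ->]|uv] /orP[/eqP[yx _]|vu].
- by rewrite yx mem_head in xs.
- by have [_ xs'] := mem_pedges vu; rewrite in_cons xs' orbT in xs.
- by rewrite yx in uv; have [_ xs'] := mem_pedges uv; rewrite in_cons xs' orbT in xs.
- exact: IH us uv vu.
Qed.

Lemma pedges_twin_free x y t : uniq (y :: t) -> x != y -> ohead t != Some x ->
  twin_free [set e in pedges x (y :: t)].
Proof.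
move=> ut xy tx.
have -> : [set e in pedges x (y :: t)] = [set (x, y)] :|: [set e in pedges y t].
  by apply/setP => e; rewrite !inE.
apply: twin_freeU (uniq_twin_free ut) _ => [u v|u v].
  by rewrite !inE => /eqP[-> ->]; rewrite xpair_eqE negb_and eq_sym xy.
rewrite !inE => /eqP[-> ->]; apply: contra tx; case: t ut => // y' t.
rewrite pedges_cons in_cons => /andP[yt _] /orP[/eqP[->]//|/mem_pedges[/mem_belast]].
by rewrite (negPf yt).
Qed.

Definition induced H S : {set V * V} := H :&: setX S S.

Lemma erel_induced H S u v :
  erel (induced H S) u v = [&& (u, v) \in H, u \in S & v \in S].
Proof. by rewrite /erel !inE. Qed.

Lemma path_induced H S x s : path (erel (induced H S)) x s -> {subset s <= S}.
Proof.
elim: s x => // y s IH x /andP[]; rewrite erel_induced => /and3P[_ _ yS] /IH sS u.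
by rewrite in_cons => /orP[/eqP->|/sS].
Qed.

Lemma connect_induced H S x y : connect (erel (induced H S)) x y -> x \in S -> y \in S.
Proof.
case/connectP=> s xs -> xS; have := mem_last x s; rewrite in_cons.
by case/orP=> [/eqP->|/(path_induced xs)].
Qed.

Lemma exists_entry H S a b : a \in S -> b \notin S -> connect (erel H) a b ->
  exists p q, [/\ p \in S, q \notin S, (p, q) \in H &
                  connect (erel (induced H (~: S))) q b].
Proof.
move=> aS bS /connectP[s sp eb]; rewrite {b}eb in bS *.
elim/last_ind: s sp bS => [|s y IH] /=; first by rewrite aS.
rewrite rcons_path last_rcons => /andP[sp sy] yS.
have [lS|lS] := boolP (last a s \in S); first by exists (last a s), y.
have [p [q [pS qS pq qy]]] := IH sp lS; exists p, q; split=> //.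
by apply: connect_trans qy (connect1 _); rewrite erel_induced !inE lS yS !andbT.
Qed.

Lemma exists_exit H S y c : y \notin S -> c \in S -> connect (erel H) y c ->
  exists y' z, [/\ connect (erel (induced H (~: S))) y y', (y', z) \in H & z \in S].
Proof.
move=> yS cS /connectP[s sp ec]; rewrite {c}ec in cS.
elim: s y sp yS cS => [|x s IH] y /=; first by move=> _ /negPf->.
move=> /andP[yx xs] yS lS; have [xS|xS] := boolP (x \in S); first by exists y, x.
have [y' [z [xy' y'z zS]]] := IH x xs xS lS; exists y', z; split=> //.
by apply: connect_trans (connect1 _) xy'; rewrite erel_induced !inE yS xS !andbT.
Qed.

Record tsc_subgraph H F S : Prop := TscSubgraph {
  tsc_subgraph_sub : F \subset H;
  tsc_subgraph_ends : forall u v, (u, v) \in F -> u \in S /\ v \in S;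
  tsc_subgraph_twin_free : twin_free F;
  tsc_subgraph_connect : {in S &, forall u v, connect (erel F) u v} }.

Lemma tsc_subgraph_tsc H F S a b : tsc_subgraph H F S -> a \in S -> b \in S -> tsc H a b.
Proof.
case=> /subsetP FH _ twF Fconn aS bS.
have [p ap lp] := connectP (Fconn _ _ aS bS).
have [q bq lq] := connectP (Fconn _ _ bS aS).
have FHrel : subrel (erel F) (erel H) by move=> u v /FH.
exists p, q; split; [exact: sub_path ap | by rewrite lp | exact: sub_path bq | by rewrite lq |].
move=> u v /(path_pedges ap) uv.
by apply: contraNN (twF _ _ uv) => /(path_pedges bq).
Qed.

Lemma tsc_subgraph_add_walk H F S x t :
  tsc_subgraph H F S -> x \in S -> last x t \in S -> path (erel H) x t ->
  twin_free [set e in pedges x t] ->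
  (forall u v, (u, v) \in pedges x t -> (u \notin S) || (v \notin S)) ->
  tsc_subgraph H (F :|: [set e in pedges x t]) (S :|: [set y in t]).
Proof.
case=> FH Fends twF Fconn xS lS Ht twt tout.
set F' := F :|: _; set S' := S :|: _.
have FF' : subrel (connect (erel F)) (connect (erel F')).
  by apply: connect_sub => u v uv; apply/connect1/(subsetP (subsetUl _ _)).
have F't : path (erel F') x t.
  by rewrite path_pedgesE; apply/allP => -[u v] uv; rewrite /= /erel !inE uv orbT.
have conn_x u : u \in S' -> connect (erel F') x u /\ connect (erel F') u x.
  rewrite !inE => /orP[uS|ut]; first by split; apply/FF'/Fconn.
  split; first by apply: (path_connect F't); rewrite in_cons ut orbT.
  apply: connect_trans (connect_to_last F't _) (FF' _ _ (Fconn _ _ lS xS)).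
  by rewrite in_cons ut orbT.
split.
- apply/subsetP => -[u v]; rewrite !inE => /orP[/(subsetP FH)//|].
  exact: path_pedges Ht.
- move=> u v; rewrite !inE => /orP[/Fends[-> ->]//|/mem_pedges[/mem_belast]].
  by rewrite in_cons => /orP[/eqP->|->] ->; rewrite ?xS !orbT.
- apply: twin_freeU => // u v /Fends[uS vS]; rewrite inE.
  by apply/negP => /tout; rewrite uS vS.
- by move=> u v /conn_x[_ ux] /conn_x[xv _]; apply: connect_trans ux xv.
Qed.

(* The last condition rules out the ear x -> d -> x made of two twin edges. *)
Definition ear H S x d d' z :=
  [/\ x \in S, z \in S, d \notin S, (x, d) \in H &
      [/\ (d', z) \in H, connect (erel (induced H (~: S))) d d' & (x, d) != (z, d')]].

Lemma tsc_subgraph_ear H F S x d d' z : tsc_subgraph H F S -> ear H S x d d' z ->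
  exists F' S', S \proper S' /\ tsc_subgraph H F' S'.
Proof.
move=> sub [xS zS dS xd [d'z /connectP[s0 ps0 ed'] ne]]; rewrite {d'}ed' in d'z ne.
case: (shortenP ps0) d'z ne => s ds uds _ d'z ne.
have sS : {subset d :: s <= ~: S}.
  by move=> u; rewrite in_cons inE => /orP[/eqP->//|/(path_induced ds)]; rewrite inE.
have Hds : path (erel H) d s.
  by apply: sub_path ds => u v; rewrite erel_induced => /andP[].
exists (F :|: [set e in pedges x (d :: rcons s z)]), (S :|: [set y in d :: rcons s z]).
split; first by rewrite properUl //; apply/subsetPn; exists d; rewrite ?inE ?eqxx.
apply: tsc_subgraph_add_walk => //.
- by rewrite /= last_rcons.
- by rewrite /= rcons_path Hds; apply/and3P.
- apply: pedges_twin_free.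
  + by rewrite -rcons_cons rcons_uniq uds andbT; apply: contraL zS => /sS; rewrite inE.
  + by apply: contraNneq dS => <-.
  + case: s sS {ds uds Hds d'z} ne => [|y s] sS /=.
      by rewrite xpair_eqE eqxx andbT eq_sym.
    have := sS y; rewrite !inE eqxx orbT => /(_ isT) yS _.
    by apply: contraNneq yS => -[->].
- move=> u v; rewrite pedges_cons in_cons => /orP[/eqP[_ ->]|/mem_pedges[]].
    by rewrite dS orbT.
  by rewrite belast_rcons => /sS; rewrite inE => ->.
Qed.

Definition twinless_cut H a b := forall X, a \in X -> b \notin X ->
  exists x y x' y', [/\ (x, y) \in H, x \in X, y \notin X, (y', x') \in H &
                         [/\ y' \notin X, x' \in X & (x, y) != (x', y')]].

Lemma tsc_cut H a b : tsc H a b -> twinless_cut H a b.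
Proof.
case=> p [q [ap lp bq lq tw]] X aX bX.
have lpX : last a p \notin X by rewrite lp.
have bX' : b \in ~: X by rewrite inE.
have lqX : last b q \notin ~: X by rewrite lq inE negbK.
have [x [y [xy xX yX]]] := pedges_cross aX lpX.
have [y' [x' [yx' yX' xX']]] := pedges_cross bX' lqX.
rewrite !inE negbK in yX' xX'; exists x, y, x', y'; split=> //.
- exact: path_pedges ap xy.
- exact: path_pedges bq yx'.
- by split=> //; apply: contraNneq (tw _ _ xy) => -[-> ->].
Qed.

Lemma twinless_cut_trans H a b c :
  twinless_cut H a b -> twinless_cut H b c -> twinless_cut H a c.
Proof. by move=> ab bc X aX cX; have [/bc|/ab] := boolP (b \in X); apply. Qed.

Lemma exists_ear H S a b : strongly_connected H -> twinless_cut H a b ->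
  a \in S -> b \notin S -> exists x d d' z, ear H S x d d' z.
Proof.
move=> scH cut aS bS; set R := erel (induced H (~: S)).
have [p [q [pS qS pq qb]]] := exists_entry aS bS (scH a b).
have RS y : connect R q y -> y \notin S by move/connect_induced; rewrite !inE; apply.
(* Cut off the vertices reachable from q outside S. *)
have [||x [y [x' [y' [xy xY yY y'x' [y'Y x'Y ne]]]]]] :=
  cut [set y | ~~ connect R q y]; rewrite ?inE ?negbK //.
  by apply: contraL aS; apply: RS.
rewrite !inE ?negbK in xY yY y'Y x'Y.
have x'S : x' \in S.
  apply: contraR x'Y => x'S; have y'S := RS _ y'Y.
  by apply: connect_trans y'Y (connect1 _); rewrite /R erel_induced y'x' !inE x'S y'S.
have [[ep eq'] | pq_ne] := eqVneq (p, q) (x', y'); last by exists p, q, y', x'.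
(* (p, q) reverses (y', x'); build the ear from (x, y) and an exit from y instead. *)
subst p q; have yS := RS _ yY.
have [y2 [z [yy2 y2z zS]]] := exists_exit yS aS (scH y a).
have [xS | xS] := boolP (x \in S).
  have [[ex ey] | xy_ne] := eqVneq (x, y) (z, y2); last by exists x, y, y2, z.
  subst z y2; exists x', y', y, x; split=> //; split=> //; by rewrite eq_sym.
have [s [d [sS dS sd dx]]] := exists_entry aS xS (scH a x).
have dy2 : connect R d y2.
  apply: connect_trans dx (connect_trans (connect1 _) yy2).
  by rewrite /R erel_induced xy !inE xS yS.
exists s, d, y2, z; split=> //; split=> //; apply: contraNneq xY => -[_ ey2].
by apply: connect_trans yY (connect_trans yy2 _); rewrite -ey2.
Qed.

Lemma twinless_cut_tsc H a b : strongly_connected H -> twinless_cut H a b -> tsc H a b.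
Proof.
move=> scH cut.
suff grow S F : a \in S -> tsc_subgraph H F S -> tsc H a b.
  apply: (grow [set a] set0); rewrite ?set11 //.
  split=> [|u v|u v|u v]; rewrite ?sub0set ?inE //.
  by move=> /eqP-> /eqP->; apply: connect0.
have [n] := ubnP #|~: S|; elim: n S F => // n IH S F ltSn aS sub.
have [bS|bS] := boolP (b \in S); first exact: tsc_subgraph_tsc sub aS bS.
have [x [d [d' [z ear_xz]]]] := exists_ear scH cut aS bS.
have [F' [S' [ltSS' sub']]] := tsc_subgraph_ear sub ear_xz.
apply: IH sub'; last exact: subsetP (proper_sub ltSS') a aS.
by rewrite -ltnS (leq_trans _ ltSn) // ltnS proper_card // properC.
Qed.

Lemma tsc_refl H a : tsc H a a.
Proof. by exists [::], [::]. Qed.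

Lemma tsc_sym H a b : tsc H a b -> tsc H b a.
Proof.
case=> p [q [ap lp bq lq tw]]; exists q, p; split=> // x y xy.
by apply: contraL xy; apply: tw.
Qed.

Lemma tsc_trans H a b c : strongly_connected H -> tsc H a b -> tsc H b c -> tsc H a c.
Proof.
move=> scH /tsc_cut ab /tsc_cut bc.
exact/(twinless_cut_tsc scH)/(twinless_cut_trans ab bc).
Qed.

Lemma eq_tscc H a b : strongly_connected H -> tscc H a = tscc H b <-> tsc H a b.
Proof.
move=> scH; split=> [eab | ab].
  have : b \in tscc H b by rewrite inE; apply/asboolP/tsc_refl.
  by rewrite -eab inE => /asboolP.
apply/setP => c; rewrite !inE; apply/asboolP/asboolP => [ac|bc].
  exact: tsc_trans scH (tsc_sym ab) ac.
exact: tsc_trans scH ab bc.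
Qed.

Lemma tscS H H' a b : H \subset H' -> tsc H a b -> tsc H' a b.
Proof.
move=> /subsetP HH' [p [q [ap lp bq lq tw]]].
have HH'rel : subrel (erel H) (erel H') by move=> u v /HH'.
by exists p, q; split=> //; [apply: sub_path ap | apply: sub_path bq].
Qed.

Lemma strongly_connectedS H H' : H \subset H' -> strongly_connected H -> strongly_connected H'.
Proof.
move=> /subsetP HH' scH u v; apply: connect_sub (scH u v) => x y xy.
exact/connect1/HH'.
Qed.

Lemma tsc_of_edge H a b : strongly_connected H -> (b, a) \in H -> (a, b) \notin H -> tsc H a b.
Proof.
move=> scH ba abH; have [p ap lp] := connectP (scH a b).
exists p, [:: a]; split=> //=; first by rewrite andbT.
move=> x y /(path_pedges ap) xy.
by rewrite inE; apply: contraNneq abH => -[<- <-].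
Qed.

Lemma n_tscc_merge H H' a b : strongly_connected H -> H \subset H' ->
  tscc H a != tscc H b -> tsc H' a b -> n_tscc H' < n_tscc H.
Proof.
move=> scH HH' neq ab; have scH' := strongly_connectedS HH' scH.
apply: (card_imset_coarser (a := a) (b := b)) => // [x y|].
  by move=> /(eq_tscc _ _ scH)/(tscS HH')/(eq_tscc _ _ scH').
exact/(eq_tscc _ _ scH').
Qed.

End TwinlessStrongConnectivity.

Theorem mainTheorem2 (V : finType) (E E1 : {set V * V}) (v w : V) (k : nat) :
  twinless_strongly_connected E ->
  E1 \subset E ->
  strongly_connected E1 ->
  ~ twinless_strongly_connected E1 ->
  (v, w) \in E -> (v, w) \notin E1 ->
  tscc E1 v != tscc E1 w ->
  n_tscc E1 = k ->
  n_tscc ((v, w) |: E1) < k.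
Proof.
move=> _ _ scE1 _ _ vwE1 neq <-.
have wvE1 : (w, v) \notin E1.
  by apply: contra neq => wv; apply/eqP/(eq_tscc _ _ scE1)/tsc_of_edge.
have vw : v != w by apply: contraNneq neq => ->.
have E1E2 : E1 \subset (v, w) |: E1 := subsetUr _ _.
have scE2 := strongly_connectedS E1E2 scE1.
apply: n_tscc_merge scE1 E1E2 neq _; apply/tsc_sym/tsc_of_edge => //; first exact: setU11.
by rewrite in_setU1 negb_or wvE1 andbT; apply: contra vw => /eqP[->].
Qed.
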